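(* Let $\alpha\in(0,1)$, $R>0$, and let $V(\lambda)$ be the maximal Phase-II observation time when at the contact time $t_2$ the target is on the boundary of the observation disk with relative bearing $\lambda\in[-\pi,\pi]$. Then the maximum possible observation time is $\max_{\lambda\in[-\pi,\pi]}V(\lambda)=\frac{2R}{1-\alpha}$.
   Context: Target: position $(0,y_T(t))$, $\dot y_T=1$. Observer: position $(x_O(t),y_O(t))$, $\dot x_O=\alpha\cos\psi(t)$, $\dot y_O=\alpha\sin\psi(t)$, heading $\psi$ a measurable control. Contact with bearing $\lambda$ at time $t_2$ means $\big(x_O(t_2),y_O(t_2)-y_T(t_2)\big)=R(\sin\lambda,\cos\lambda)$. For a control on $[t_2,\infty)$, $t_f=\inf\{t\ge t_2: x_O(t)^2+(y_O(t)-y_T(t))^2>R^2\}$ and the observation time is $t_f-t_2$; $V(\lambda)$ is the supremum of $t_f-t_2$ over all controls. *)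

From HB Require Import structures.
From mathcomp Require Import all_boot all_order all_algebra.
From mathcomp Require Import all_classical all_reals all_analysis.
Set Implicit Arguments. Unset Strict Implicit. Unset Printing Implicit Defensive.
Import Order.TTheory GRing.Theory Num.Theory.
Import numFieldNormedType.Exports.
Local Open Scope classical_set_scope.
Local Open Scope ring_scope.

Section Pursuit.
Variable R : realType.

(* Relative position of the observer w.r.t. the target, at time t >= t2,
   for speed ratio alpha, disk radius r, bearing lam at contact time t2 and
   heading control psi (target: (0, y_T), dy_T/dt = 1; observer:
   dx_O/dt = alpha cos psi, dy_O/dt = alpha sin psi). *)
Definition x_rel (alpha r lam t2 : R) (psi : R -> R) (t : R) : R :=
  r * sin lam + alpha * (\int[lebesgue_measure]_(s in `[t2, t]) cos (psi s)).

Definition y_rel (alpha r lam t2 : R) (psi : R -> R) (t : R) : R :=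
  r * cos lam + alpha * (\int[lebesgue_measure]_(s in `[t2, t]) sin (psi s))
  - (t - t2).

Definition t_final (alpha r lam t2 : R) (psi : R -> R) : \bar R :=
  ereal_inf [set t%:E | t in [set t : R | t2 <= t /\
     r ^+ 2 < x_rel alpha r lam t2 psi t ^+ 2 + y_rel alpha r lam t2 psi t ^+ 2]].

Definition obs_time (alpha r lam t2 : R) (psi : R -> R) : \bar R :=
  (t_final alpha r lam t2 psi - t2%:E)%E.

Definition Vmax (alpha r t2 lam : R) : \bar R :=
  ereal_sup [set obs_time alpha r lam t2 psi |
               psi in [set psi : R -> R | measurable_fun setT psi]].

End Pursuit.

(** The relative ordinate [y] of the observer with respect to the target
    decreases at rate at least [1 - alpha], since the observer's own ordinate
    grows at rate at most [alpha].  It starts at most at [r], so after time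
    [2 r / (1 - alpha)] it is below [-r] and the target has left the disk,
    whatever the bearing and the control.  Conversely, at bearing [0] the
    observer is a distance [r] ahead of the target on its course; moving along
    that course, it is overtaken at relative speed [1 - alpha] while [x = 0],
    so the target crosses a whole diameter, which takes exactly that long. *)
From HB Require Import structures.
From mathcomp Require Import all_boot all_order all_algebra.
From mathcomp Require Import all_classical all_reals all_analysis.
From mathcomp Require Import ring lra.
Import Order.TTheory GRing.Theory Num.Theory.
Import numFieldNormedType.Exports.
Local Open Scope classical_set_scope.
Local Open Scope ring_scope.

Lemma Rintegral_itv_cst (R : realType) (a b c : R) : a <= b ->
  \int[lebesgue_measure]_(s in `[a, b]) c = c * (b - a).
Proof.
move=> ab; rewrite Rintegral_cst; last exact: measurable_itv.
suff -> : fine (lebesgue_measure `[a, b]) = b - a by [].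
rewrite lebesgue_measure_itv /= lte_fin.
by case: (ltgtP a b) ab => //= -> _; rewrite subrr.
Qed.

Lemma Rintegral_itv_sin_le (R : realType) (psi : R -> R) (a b : R) :
  measurable_fun setT psi -> a <= b ->
  \int[lebesgue_measure]_(s in `[a, b]) sin (psi s) <= b - a.
Proof.
move=> mpsi ab.
have mab : measurable `[a, b] by exact: measurable_itv.
have int1 : lebesgue_measure.-integrable `[a, b] (EFin \o cst (1 : R)).
  apply: continuous_compact_integrable; first exact: segment_compact.
  by apply: continuous_subspaceT => x; exact: cst_continuous.
rewrite -[b - a]mul1r -Rintegral_itv_cst //.
apply: (@le_Rintegral _ _ _ _ _ _ (cst 1)) => //.
- eapply le_integrable; [exact: mab| | |exact: int1].
    apply/measurable_realfun.measurable_EFinP; apply: measurableT_comp.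
      exact: measurable_realfun.continuous_measurable_fun (@continuous_sin R).
    exact: measurable_funS mpsi.
  by move=> x _ /=; rewrite normr1 lee_fin; exact: sin_max.
- by move=> x _; exact: sin_le1.
Qed.

Section Pursuit.
Variables (R : realType) (alpha r t2 : R).

Lemma y_rel_le (lam : R) (psi : R -> R) (t : R) :
  0 <= alpha -> 0 <= r -> measurable_fun setT psi -> t2 <= t ->
  y_rel alpha r lam t2 psi t <= r - (1 - alpha) * (t - t2).
Proof.
move=> alpha_ge0 r_ge0 mpsi t2t.
have := @Rintegral_itv_sin_le R psi t2 t mpsi t2t; rewrite /y_rel.
set I := \int[_]_(_ in _) _ => I_le.
have : r * cos lam <= r by rewrite ler_piMr // cos_le1.
have : alpha * I <= alpha * (t - t2) by rewrite ler_wpM2l.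
lra.
Qed.

Lemma t_final_le_exit (lam : R) (psi : R -> R) (t : R) : t2 <= t ->
  r ^+ 2 < x_rel alpha r lam t2 psi t ^+ 2 + y_rel alpha r lam t2 psi t ^+ 2 ->
  (t_final alpha r lam t2 psi <= t%:E)%E.
Proof. by move=> t2t exit; apply: ereal_inf_lbound; exists t. Qed.

Lemma obs_time_le (lam : R) (psi : R -> R) :
  0 < alpha < 1 -> 0 < r -> measurable_fun setT psi ->
  (obs_time alpha r lam t2 psi <= ((2 * r) / (1 - alpha))%:E)%E.
Proof.
move=> /andP[alpha_gt0 alpha_lt1] r_gt0 mpsi.
set B := (2 * r) / (1 - alpha).
have B_ge0 : 0 <= B by rewrite divr_ge0 //; lra.
have B_def : (1 - alpha) * B = 2 * r by rewrite mulrC divfK // gt_eqF // subr_gt0.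
clearbody B.
rewrite /obs_time leeBlDr // -EFinD.
apply/lee_addgt0Pr => e e_gt0; rewrite -EFinD.
have t2t : t2 <= B + t2 + e by lra.
apply: t_final_le_exit => //.
have := y_rel_le lam psi _ (ltW alpha_gt0) (ltW r_gt0) mpsi t2t.
move: (x_rel _ _ _ _ _ _) (y_rel _ _ _ _ _ _) => x y y_le.
have y_lt : y < - r.
  have : 0 < (1 - alpha) * e by apply: mulr_gt0; lra.
  nra.
have := sqr_ge0 x.
nra.
Qed.

Lemma x_rel_straight (t : R) : t2 <= t ->
  x_rel alpha r 0 t2 (fun=> pi / 2) t = 0.
Proof.
by move=> t2t; rewrite /x_rel Rintegral_itv_cst // cos_pihalf sin0; ring.
Qed.

Lemma y_rel_straight (t : R) : t2 <= t ->
  y_rel alpha r 0 t2 (fun=> pi / 2) t = r - (1 - alpha) * (t - t2).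
Proof.
by move=> t2t; rewrite /y_rel Rintegral_itv_cst // sin_pihalf cos0; ring.
Qed.

Lemma obs_time_straight : 0 < alpha < 1 -> 0 < r ->
  obs_time alpha r 0 t2 (fun=> pi / 2) = ((2 * r) / (1 - alpha))%:E.
Proof.
move=> alpha01 r_gt0; apply/le_anti/andP; split.
  by apply: obs_time_le => //; exact: measurable_cst.
case/andP: alpha01 => alpha_gt0 alpha_lt1.
rewrite /obs_time leeBrDr // -EFinD.
apply/ereal_infP => _ [t [t2t exit] <-]; rewrite lee_fin.
move: exit; rewrite x_rel_straight // y_rel_straight // expr0n /= add0r => exit.
have drift_ge0 : 0 <= (1 - alpha) * (t - t2) by apply: mulr_ge0; lra.
have drift_gt : 2 * r < (1 - alpha) * (t - t2) by nra.
rewrite -lerBrDr ler_pdivrMr ?subr_gt0 //; lra.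
Qed.

End Pursuit.

Theorem lemma5 (R : realType) (alpha r t2 : R) :
  0 < alpha < 1 -> 0 < r ->
  (exists2 lam0 : R, - pi <= lam0 <= pi &
     Vmax alpha r t2 lam0 = ((2 * r) / (1 - alpha))%:E) /\
  (forall lam : R, - pi <= lam <= pi ->
     (Vmax alpha r t2 lam <= ((2 * r) / (1 - alpha))%:E)%E).
Proof.
move=> alpha01 r_gt0.
have Vmax_le lam : (Vmax alpha r t2 lam <= ((2 * r) / (1 - alpha))%:E)%E.
  apply: ge_ereal_sup => _ [psi mpsi <-]; exact: obs_time_le alpha01 r_gt0 mpsi.
split; last by move=> lam _; exact: Vmax_le.
exists 0; first by rewrite oppr_le0 pi_ge0.
apply/le_anti; rewrite Vmax_le /=.
rewrite -(obs_time_straight _ _ _ t2 alpha01 r_gt0).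
by apply: ereal_sup_ubound; exists (fun=> pi / 2); first exact: measurable_cst.
Qed.
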